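(* Let $\beta\in\{1,2\}$ and let $r\geq\beta$ be an integer. Let $x\in[0,1]^N$ and let $q=Q^{\Sigma\Delta,r}_{\mathcal{A}_\delta}(x)$ be its $r$-th order $\Sigma\Delta$ quantization, whose state vector $u$ satisfies $x-q=D^ru$ and $\|u\|_\infty\leq\delta/2$. Let $\hat x$ be a solution to $$\min_{z\in\mathbb{R}^N}\|(D^\beta)^Tz\|_1\quad\text{subject to}\quad \|D^{-r}(z-q)\|_\infty\leq\delta/2.$$ Then for every integer $1\leq s\leq N$, $$\|\hat x-x\|_2\leq C\Big(\sqrt{s}\,\delta+\sqrt{\sigma_s((D^\beta)^Tx)\,\delta}\Big),$$ where $C$ is a constant independent of $x$.
   Context: $D$ is the $N\times N$ matrix with $1$ on the diagonal, $-1$ on the subdiagonal, $0$ elsewhere. For $z\in\mathbb{R}^N$, $\sigma_s(z)=\min_{v\ s\text{-sparse}}\|v-z\|_1$ is the $\ell_1$ error of the best $s$-term approximation. The alphabet is $\mathcal{A}_\delta=\{c+J\delta: J\in\mathbb{Z},\ J_1\leq J\leq J_2\}$, and $Q_{\mathcal{A}}(z)$ is an element of $\mathcal{A}$ nearest to $z$. The $r$-th order $\Sigma\Delta$ quantization of $y\in\mathbb{R}^N$: with $u_i=0$ for $i\leq0$, set $q_i=Q_{\mathcal{A}}\big(\sum_{j=1}^r(-1)^{j-1}\binom{r}{j}u_{i-j}+y_i\big)$ and define $u_i$ by $(D^ru)_i=y_i-q_i$, $i=1,\dots,N$. The alphabet is assumed to have enough levels that $\|u\|_\infty\leq\delta/2$.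 *)

From HB Require Import structures.
From mathcomp Require Import all_boot all_order all_algebra.
From mathcomp Require Import classical_sets reals.
Set Implicit Arguments. Unset Strict Implicit. Unset Printing Implicit Defensive.
Import Order.TTheory GRing.Theory Num.Theory.
Local Open Scope ring_scope.


Section Defs.
Variable R : realType.

Definition Dmx (N : nat) : 'M[R]_N :=
  \matrix_(i < N, j < N)
     (if i == j :> nat then 1 else if i == j.+1 :> nat then -1 else 0).

Definition l1norm N (v : 'cV[R]_N) : R := \sum_(i < N) `|v i 0|.
Definition l2norm N (v : 'cV[R]_N) : R := Num.sqrt (\sum_(i < N) (v i 0) ^+ 2).
Definition linfnorm N (v : 'cV[R]_N) : R := \big[Num.max/0]_(i < N) `|v i 0|.

Definition sparse N (s : nat) (v : 'cV[R]_N) : bool :=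
  (#|[pred i : 'I_N | v i ord0 != 0%R]| <= s)%N.

Definition sigma_s N (s : nat) (z : 'cV[R]_N) : R :=
  inf [set e | exists v : 'cV[R]_N, sparse s v /\ e = l1norm (v - z)]%classic.

Definition alphabet (c delta : R) (J1 J2 : int) : set R :=
  [set a | exists J : int, (J1 <= J <= J2)%R /\ a = c + J%:~R * delta]%classic.

Definition vat N (v : 'cV[R]_N) (k : nat) : R :=
  if @insub nat (fun k => k < N)%N _ k is Some i then v i 0 else 0.

(* q is the r-th order Sigma-Delta quantization of y over alphabet A, with
   state vector u (indices shifted to start at 0; u_i = 0 for i < 0):
   q_i is an element of A nearest to sum_{j=1}^r (-1)^(j-1) C(r,j) u_{i-j} + y_i,
   and (D^r u)_i = y_i - q_i. *)
Definition sigma_delta N (r : nat) (A : set R) (y q u : 'cV[R]_N) : Prop :=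
  (forall i : 'I_N,
     let v := \sum_(1 <= j < r.+1)
                (-1) ^+ j.-1 * ('C(r, j))%:R * (if (j <= i)%N then vat u (i - j) else 0)
              + y i 0 in
     A (q i 0) /\ forall a, A a -> `|v - q i 0| <= `|v - a|)
  /\ (Dmx N) ^+ r *m u = y - q.

Definition feasible N (r : nat) (delta : R) (q z : 'cV[R]_N) : Prop :=
  linfnorm (invmx ((Dmx N) ^+ r) *m (z - q)) <= delta / 2.

Definition is_minimizer N (beta r : nat) (delta : R) (q xh : 'cV[R]_N) : Prop :=
  feasible r delta q xh /\
  forall z, feasible r delta q z ->
    l1norm (((Dmx N) ^+ beta)^T *m xh) <= l1norm (((Dmx N) ^+ beta)^T *m z).

End Defs.

(* Write xh - x = D^r v.  Both xh and x are feasible (x because x - q = D^r u), so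
   |v_i| <= delta.  Put z = (D^beta)^T x and y = (D^beta)^T (xh - x).  Minimality of xh
   gives ||z + y||_1 <= ||z||_1, and the usual cone argument then bounds ||y||_1 by
   2 s ||y||_oo + 2 ||v' - z||_1 for every s-sparse v', i.e. by O(s delta + sigma_s(z)).
   Finally ||xh - x||_2^2 = <y, D^(r-beta) v> <= ||y||_1 ||D^(r-beta) v||_oo, and
   D^k, (D^k)^T have l_oo -> l_oo norm at most 2^k. *)

From HB Require Import structures.
From mathcomp Require Import all_boot all_order all_algebra.
From mathcomp Require Import classical_sets reals.
From mathcomp Require Import ring lra.
Set Implicit Arguments.
Unset Strict Implicit.
Unset Printing Implicit Defensive.
Import Order.TTheory GRing.Theory Num.Theory.
Local Open Scope ring_scope.

Section NormBounds.
Variable R : numDomainType.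

Lemma sum_indicator_le1 (I : finType) (T : eqType) (f : I -> T) (a : T) :
  injective f -> \sum_j ((f j == a)%:R : R) <= 1.
Proof.
move=> f_inj; case: (pickP (fun j => f j == a)) => [j /eqP fj | none].
  rewrite (bigD1 j) //= fj eqxx big1 ?addr0 // => k /negbTE kj.
  by case: eqP => // fk; rewrite -fj in fk; rewrite (f_inj _ _ fk) eqxx in kj.
by rewrite big1 // => j _; rewrite none.
Qed.

Lemma trmxX n (A : 'M[R]_n) k : (A ^+ k)^T = A^T ^+ k.
Proof.
elim: k => [|k IHk]; first by rewrite !expr0 trmx1.
by rewrite exprSr exprS -!mulmxE trmx_mul IHk.
Qed.

Lemma norm_mulmx_le m n (A : 'M[R]_(m, n)) (v : 'cV[R]_n) (a b : R) :
  0 <= b -> (forall i, \sum_j `|A i j| <= a) -> (forall j, `|v j 0| <= b) ->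
  forall i, `|(A *m v) i 0| <= a * b.
Proof.
move=> b_ge0 rowA vb i; rewrite mxE.
apply: le_trans (ler_norm_sum _ _ _) _.
apply: le_trans (_ : \sum_j `|A i j| * b <= _); last by rewrite -mulr_suml ler_wpM2r.
by apply: ler_sum => j _; rewrite normrM ler_wpM2l.
Qed.

Lemma norm_mulmx_exp_le n (A : 'M[R]_n) (v : 'cV[R]_n) (a b : R) k :
  0 <= a -> 0 <= b -> (forall i, \sum_j `|A i j| <= a) -> (forall j, `|v j 0| <= b) ->
  forall i, `|(A ^+ k *m v) i 0| <= a ^+ k * b.
Proof.
move=> a_ge0 b_ge0 rowA; elim: k v => [|k IHk] v vb i.
  by rewrite expr0 mul1mx mul1r.
rewrite exprS -mulmxE -mulmxA exprS -mulrA.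
by apply: norm_mulmx_le (IHk _ vb) i; rewrite // mulr_ge0 ?exprn_ge0.
Qed.

Lemma sum_sqr_mulmx m n (A : 'M[R]_(m, n)) (p : 'cV[R]_n) :
  \sum_i ((A *m p) i 0) ^+ 2 = \sum_j (A^T *m (A *m p)) j 0 * p j 0.
Proof.
have Ep : ((A *m p)^T *m (A *m p)) 0 0 = ((A^T *m (A *m p))^T *m p) 0 0.
  by rewrite [(A^T *m _)^T]trmx_mul trmxK mulmxA.
move: Ep; rewrite !mxE => Ep.
transitivity (\sum_i (A *m p)^T 0 i * (A *m p) i 0).
  by apply: eq_bigr => i _; rewrite expr2 [(A *m p)^T _ _]mxE.
by rewrite Ep; apply: eq_bigr => j _; rewrite [_^T _ _]mxE.
Qed.

End NormBounds.

Section DifferenceMatrix.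
Variables (R : realType) (N : nat).
Local Notation D := (Dmx R N).

Lemma normr_Dmx_le (i j : 'I_N) :
  `|D i j| <= (i == j :> nat)%:R + (i == j.+1 :> nat)%:R.
Proof.
rewrite mxE; case: eqP => [->|_]; first by rewrite normr1 lerDl ler0n.
by case: eqP => _; rewrite ?normrN ?normr1 ?normr0 ?add0r.
Qed.

Lemma sum_Dmx_row_le i : \sum_j `|D i j| <= 2.
Proof.
apply: le_trans (ler_sum _ (fun j _ => normr_Dmx_le i j)) _.
rewrite big_split /= -[2 : R]/(1 + 1); apply: lerD.
  by under eq_bigr do rewrite eq_sym; apply: sum_indicator_le1 => j k /val_inj.
by under eq_bigr do rewrite eq_sym; apply: sum_indicator_le1 => j k [] /val_inj.
Qed.

Lemma sum_trDmx_row_le j : \sum_i `|D^T j i| <= 2.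
Proof.
under eq_bigr do rewrite mxE.
apply: le_trans (ler_sum _ (fun i _ => normr_Dmx_le i j)) _.
rewrite big_split /= -[2 : R]/(1 + 1); apply: lerD.
  by apply: sum_indicator_le1 => i k /val_inj.
by apply: sum_indicator_le1 => i k /val_inj.
Qed.

Lemma det_Dmx : \det D = 1.
Proof.
rewrite det_trig; first by apply: big1 => i _; rewrite mxE eqxx.
apply/is_trig_mxP => i j lt_ij; rewrite mxE (ltn_eqF lt_ij).
by rewrite ltn_eqF // ltnW.
Qed.

Lemma unitmx_Dmx_exp k : D ^+ k \in unitmx.
Proof.
elim: k => [|k IHk]; first by rewrite expr0 unitmx1.
by rewrite exprS -mulmxE unitmx_mul IHk unitmxE det_Dmx unitr1.
Qed.

Lemma norm_Dmx_exp_mul_le k (v : 'cV[R]_N) b :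
  0 <= b -> (forall j, `|v j 0| <= b) -> forall i, `|(D ^+ k *m v) i 0| <= 2 ^+ k * b.
Proof. by move=> b_ge0; apply: norm_mulmx_exp_le => //; apply: sum_Dmx_row_le. Qed.

Lemma norm_trDmx_exp_mul_le k (v : 'cV[R]_N) b :
  0 <= b -> (forall j, `|v j 0| <= b) -> forall i, `|((D ^+ k)^T *m v) i 0| <= 2 ^+ k * b.
Proof.
by move=> b_ge0; rewrite trmxX; apply: norm_mulmx_exp_le => //; apply: sum_trDmx_row_le.
Qed.

End DifferenceMatrix.

Section SparseApproximation.
Variables (R : realType) (N : nat).
Implicit Types (v y z : 'cV[R]_N) (s : nat).

Lemma l1norm_ge0 v : 0 <= l1norm v.
Proof. by apply: sumr_ge0 => i _. Qed.

Lemma linfnorm_ge v i : `|v i 0| <= linfnorm v.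
Proof. exact: (le_bigmax 0 (fun i : 'I_N => `|v i 0|) i). Qed.

Lemma sum_mul_le_l1norm y (p : 'cV[R]_N) b :
  (forall j, `|p j 0| <= b) -> \sum_j y j 0 * p j 0 <= l1norm y * b.
Proof.
move=> pb; rewrite /l1norm mulr_suml; apply: ler_sum => j _.
by apply: le_trans (ler_norm _) _; rewrite normrM ler_wpM2l.
Qed.

Lemma sparse0 s : sparse s (0 : 'cV[R]_N).
Proof. by rewrite /sparse (eq_card0 (fun i => _)) // => i; rewrite !inE mxE eqxx. Qed.

Lemma best_sparse_errors_neq0 s z :
  ([set e | exists v, sparse s v /\ e = l1norm (v - z)] !=set0)%classic.
Proof. by exists (l1norm (0 - z)), 0; rewrite sparse0. Qed.

Lemma sigma_s_ge0 s z : 0 <= sigma_s s z.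
Proof.
by apply: lb_le_inf (best_sparse_errors_neq0 s z) _ => _ [v [_ ->]]; apply: l1norm_ge0.
Qed.

Lemma le_sigma_s s z (a b c : R) : 0 < c ->
  (forall v, sparse s v -> a <= b + c * l1norm (v - z)) -> a <= b + c * sigma_s s z.
Proof.
move=> c_gt0 bound; rewrite addrC -lerBlDr -ler_pdivrMl //.
apply: lb_le_inf (best_sparse_errors_neq0 s z) _ => _ [v [sp_v ->]].
by rewrite ler_pdivrMl // lerBlDr addrC bound.
Qed.

Lemma normr_cone_le (z w : R) {y M : R} : `|y| <= M ->
  `|y| <= 2 * (if w != 0 then M else 0) + 2 * `|w - z| + (`|z + y| - `|z|).
Proof.
move=> yM; have zy_y := ler_normB (z + y) z; have zy_z := ler_normB (z + y) y.
rewrite addrC addKr in zy_y; rewrite addrK in zy_z.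
have := normr_ge0 (w - z); case: eqP => [->|_] /=; last lra.
by rewrite sub0r normrN; lra.
Qed.

Lemma l1norm_cone_le s z y v (M : R) :
  sparse s v -> l1norm (z + y) <= l1norm z -> 0 <= M -> (forall i, `|y i 0| <= M) ->
  l1norm y <= 2 * (s%:R * M) + 2 * l1norm (v - z).
Proof.
move=> sp_v descent M_ge0 yM.
have support : \sum_i (if v i 0 != 0 then M else 0) <= s%:R * M.
  by rewrite -big_mkcond sumr_const -[M *+ _]mulr_natl ler_wpM2r // ler_nat.
have l1_zy : l1norm (z + y) = \sum_i `|z i 0 + y i 0|.
  by apply: eq_bigr => i _; rewrite mxE.
have l1_vz : l1norm (v - z) = \sum_i `|v i 0 - z i 0|.
  by apply: eq_bigr => i _; rewrite !mxE.
rewrite {1}/l1norm l1_vz; rewrite l1_zy /l1norm in descent.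
apply: le_trans (ler_sum _ (fun i _ => normr_cone_le (z i 0) (v i 0) (yM i))) _.
rewrite !big_split /= -!mulr_sumr sumrN; lra.
Qed.

End SparseApproximation.

Lemma l2norm_le_sqrt (R : realType) N (w : 'cV[R]_N) (C a b : R) :
  0 <= C -> 0 <= a -> 0 <= b -> \sum_i (w i 0) ^+ 2 <= C ^+ 2 * (a ^+ 2 + b) ->
  l2norm w <= C * (a + Num.sqrt b).
Proof.
move=> C_ge0 a_ge0 b_ge0 sum_le; apply: le_trans (ler_wsqrtr sum_le) _.
rewrite sqrtrM ?exprn_ge0 // sqrtr_sqr ger0_norm // ler_wpM2l //.
rewrite -[leRHS]ger0_norm ?addr_ge0 ?sqrtr_ge0 // -sqrtr_sqr ler_wsqrtr //.
by rewrite sqrrD sqr_sqrtr // lerD2r lerDl mulrn_wge0 // mulr_ge0 ?sqrtr_ge0.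
Qed.

Section ReconstructionError.
Variables (R : realType) (N : nat).
Local Notation D := (Dmx R N).

Lemma feasible_state r (delta : R) (x q u : 'cV[R]_N) :
  D ^+ r *m u = x - q -> linfnorm u <= delta / 2 -> feasible r delta q x.
Proof. by move=> state u_small; rewrite /feasible -state mulKmx // unitmx_Dmx_exp. Qed.

Lemma feasible_sub_state r (delta : R) (x q u xh : 'cV[R]_N) :
  D ^+ r *m u = x - q -> linfnorm u <= delta / 2 -> feasible r delta q xh ->
  exists2 v, xh - x = D ^+ r *m v & forall i, `|v i 0| <= delta.
Proof.
move=> state u_small xh_feas; exists (invmx (D ^+ r) *m (xh - q) - u).
  by rewrite mulmxBr mulKVmx ?unitmx_Dmx_exp // state opprB addrA subrK.
move=> i; rewrite !mxE; apply: le_trans (ler_normB _ _) _.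
have := linfnorm_ge u i; have := linfnorm_ge (invmx (D ^+ r) *m (xh - q)) i.
rewrite /feasible in xh_feas; rewrite mxE; lra.
Qed.

Lemma sum_sqr_Dmx_exp_le beta r (delta : R) (w v : 'cV[R]_N) :
  (beta <= r)%N -> 0 <= delta -> w = D ^+ r *m v -> (forall i, `|v i 0| <= delta) ->
  \sum_i (w i 0) ^+ 2 <= l1norm ((D ^+ beta)^T *m w) * (2 ^+ (r - beta) * delta).
Proof.
move=> le_beta_r delta_ge0 w_eq v_small.
have w_factor : w = D ^+ beta *m (D ^+ (r - beta) *m v).
  by rewrite mulmxA mulmxE -exprD subnKC.
rewrite {1}w_factor sum_sqr_mulmx -w_factor; apply: sum_mul_le_l1norm => i.
exact: norm_Dmx_exp_mul_le.
Qed.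

Lemma sum_sqr_error_le beta r s (delta : R) (x w v : 'cV[R]_N) :
  (beta <= r)%N -> 0 < delta ->
  w = D ^+ r *m v -> (forall i, `|v i 0| <= delta) ->
  l1norm ((D ^+ beta)^T *m (x + w)) <= l1norm ((D ^+ beta)^T *m x) ->
  \sum_i (w i 0) ^+ 2 <=
    2 ^+ (2 * r).+1 * (s%:R * delta ^+ 2 + sigma_s s ((D ^+ beta)^T *m x) * delta).
Proof.
move=> le_beta_r delta_gt0 w_eq v_small descent; have delta_ge0 := ltW delta_gt0.
have energy := sum_sqr_Dmx_exp_le le_beta_r delta_ge0 w_eq v_small.
set z := (D ^+ beta)^T *m x; set y := (D ^+ beta)^T *m w in descent energy *.
have M_ge0 : 0 <= 2 ^+ beta * (2 ^+ r * delta) by rewrite !mulr_ge0 ?exprn_ge0.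
have y_small i : `|y i 0| <= 2 ^+ beta * (2 ^+ r * delta).
  apply: norm_trDmx_exp_mul_le => [|j]; first by rewrite mulr_ge0 ?exprn_ge0.
  by rewrite w_eq; apply: norm_Dmx_exp_mul_le.
have descent_zy : l1norm (z + y) <= l1norm z by rewrite -mulmxDr.
rewrite mulrDr [_ * delta]mulrC [X in _ + X]mulrA; apply: le_sigma_s => [|v' sp_v'].
  by rewrite !mulr_gt0 // exprn_gt0.
have cone := l1norm_cone_le sp_v' descent_zy M_ge0 y_small.
have T_eq : 2 ^+ beta * 2 ^+ (r - beta) = 2 ^+ r :> R by rewrite -exprD subnKC.
have K_eq : 2 * 2 ^+ r * 2 ^+ r = 2 ^+ (2 * r).+1 :> R.
  by rewrite -exprS -exprD addSn mul2n addnn.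
have B_le : 2 * 2 ^+ (r - beta) <= 2 ^+ (2 * r).+1 :> R.
  by rewrite -exprS ler_weXn2l ?ler1n // ltnS (leq_trans (leq_subr _ _)) // leq_pmull.
have expand : (2 * (s%:R * (2 ^+ beta * (2 ^+ r * delta))) + 2 * l1norm (v' - z))
    * (2 ^+ (r - beta) * delta) =
    2 ^+ (2 * r).+1 * (s%:R * delta ^+ 2) + 2 * 2 ^+ (r - beta) * (delta * l1norm (v' - z)).
  by rewrite -K_eq -T_eq; ring.
have := ler_wpM2r (mulr_ge0 (exprn_ge0 (r - beta) (ler0n R 2)) delta_ge0) cone.
have := ler_wpM2r (mulr_ge0 delta_ge0 (l1norm_ge0 (v' - z))) B_le.
rewrite expand; lra.
Qed.

End ReconstructionError.

Theorem theorem2 (R : realType) (beta r : nat) :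
  (beta = 1 \/ beta = 2)%N -> (beta <= r)%N ->
  exists C : R, 0 < C /\
  forall (N : nat) (delta c : R) (J1 J2 : int) (x q u xh : 'cV[R]_N) (s : nat),
    0 < delta ->
    (forall i : 'I_N, 0 <= x i 0 <= 1) ->
    sigma_delta r (alphabet c delta J1 J2) x q u ->
    linfnorm u <= delta / 2 ->
    is_minimizer beta r delta q xh ->
    (1 <= s <= N)%N ->
    l2norm (xh - x) <=
      C * (Num.sqrt (s%:R) * delta
           + Num.sqrt (sigma_s s (((Dmx R N) ^+ beta)^T *m x) * delta)).
Proof.
move=> _ le_beta_r; exists (2 ^+ r.+1); split; first exact: exprn_gt0.
move=> N delta c J1 J2 x q u xh s delta_gt0 _ [_ state] u_small [xh_feas xh_min] _.
have [v err_eq v_small] := feasible_sub_state state u_small xh_feas.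
have descent : l1norm ((Dmx R N ^+ beta)^T *m (x + (xh - x)))
    <= l1norm ((Dmx R N ^+ beta)^T *m x).
  by rewrite addrC subrK; apply/xh_min/(feasible_state state u_small).
have err_le := sum_sqr_error_le s le_beta_r delta_gt0 err_eq v_small descent.
have delta_ge0 := ltW delta_gt0.
apply: l2norm_le_sqrt; rewrite ?exprn_ge0 ?mulr_ge0 ?sqrtr_ge0 ?sigma_s_ge0 //.
apply: le_trans err_le _; rewrite exprMn sqr_sqrtr ?ler0n // -exprM.
rewrite ler_wpM2r ?addr_ge0 ?mulr_ge0 ?exprn_ge0 ?sigma_s_ge0 //.
by rewrite ler_weXn2l ?ler1n // mulnC ltn_pmul2r.
Qed.
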